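(* Let $S \subseteq \mathbb{R}^n$ be nonempty, closed and convex, let $F = (F_1,\dots,F_m)^\top \colon S\to\mathbb{R}^m$ be continuous with each $F_i$ $\sigma_i$-convex for some $\sigma_i > 0$, let $\ell \ge 0$, and define $u_\ell(x) := \sup_{y \in S}\min_{i=1,\dots,m}\{F_i(x) - F_i(y) - \frac{\ell}{2}\|x-y\|^2\}$, $x \in S$. Let $\sigma := \min_{i} \sigma_i$ and \[ \upsilon(\sigma) := \begin{cases} \frac{\sigma - \ell}{2}, & \text{if } \ell < \sigma/2,\\ \frac{\sigma^2}{8\ell}, & \text{otherwise}. \end{cases} \] Then $u_\ell(x) \ge \upsilon(\sigma) \inf_{x^\ast \in X^\ast}\|x - x^\ast\|^2$ for all $x \in S$, where $X^\ast$ is the set of Pareto optimal solutions of $\min_{x\in S}F(x)$.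
   Context: A function $h\colon S\to\mathbb{R}$ is $\sigma$-convex if $h(\alpha x + (1-\alpha)y) \le \alpha h(x) + (1-\alpha)h(y) - \frac{\alpha(1-\alpha)\sigma}{2}\|x-y\|^2$ for all $x,y\in S$, $\alpha\in[0,1]$. A point $x^\ast\in S$ is Pareto optimal if there is no $x\in S$ with $F_i(x)\le F_i(x^\ast)$ for all $i$ and $F(x)\ne F(x^\ast)$. *)

(* R^n is modelled by row vectors 'rV[R]_n with the
   product (= Euclidean) topology; the Euclidean norm is written out explicitly. *)
From HB Require Import structures.
From mathcomp Require Import all_boot all_order all_algebra.
From mathcomp Require Import all_classical all_reals all_analysis.
Import numFieldNormedType.Exports.
Set Implicit Arguments. Unset Strict Implicit. Unset Printing Implicit Defensive.
Import Order.TTheory GRing.Theory Num.Theory.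
Local Open Scope ring_scope.
Local Open Scope classical_set_scope.

Definition sqnorm {R : realType} {n : nat} (v : 'rV[R]_n) : R :=
  \sum_(j < n) v ord0 j ^+ 2.

Definition sigma_convex {R : realType} {n : nat} (S : set 'rV[R]_n)
  (h : 'rV[R]_n -> R) (sigma : R) : Prop :=
  forall x y a, S x -> S y -> 0 <= a <= 1 ->
    h (a *: x + (1 - a) *: y) <=
      a * h x + (1 - a) * h y - a * (1 - a) * sigma / 2 * sqnorm (x - y).

Definition pareto_optimal {R : realType} {n m : nat} (S : set 'rV[R]_n)
  (F : 'I_m -> 'rV[R]_n -> R) (xs : 'rV[R]_n) : Prop :=
  S xs /\ ~ exists x, S x /\ (forall i, F i x <= F i xs) /\
                      (fun i => F i x) <> (fun i => F i xs).

Definition u_merit {R : realType} {n m : nat} (S : set 'rV[R]_n)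
  (F : 'I_m -> 'rV[R]_n -> R) (l : R) (x : 'rV[R]_n) : \bar R :=
  ereal_sup [set \big[Order.min/+oo%E]_(i < m)
                 ((F i x - F i y - l / 2 * sqnorm (x - y))%:E) | y in S].

Definition upsilon {R : realType} (l sigma : R) : R :=
  if l < sigma / 2 then (sigma - l) / 2 else sigma ^+ 2 / (8 * l).

From HB Require Import structures.
From mathcomp Require Import all_boot all_order all_algebra.
From mathcomp Require Import all_classical all_reals all_analysis.
From mathcomp Require Import ring lra.
Import numFieldNormedType.Exports.
Set Implicit Arguments. Unset Strict Implicit. Unset Printing Implicit Defensive.
Import Order.TTheory GRing.Theory Num.Theory.
Local Open Scope ring_scope.
Local Open Scope classical_set_scope.

(* Fix x and let g y = max_i (F_i y - F_i x). Then g is sigma-convex for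
   sigma = min_i sigma_i, continuous, and g x <= 0. Strong convexity makes the
   sublevel set {g <= g x} bounded, so g attains its minimum at some xb; the
   minimizer is unique, hence Pareto optimal, and quadratic growth around it gives
   F_i xb + sigma/2 |x - xb|^2 <= F_i x for every i. Testing u_l(x) at
   y = t xb + (1 - t) x then yields the factor t sigma - (sigma + l) t^2 / 2,
   which is at least upsilon(sigma) for t = 1 when l < sigma/2 and for
   t = sigma/(2l) otherwise. *)

Section sqnorm.
Variables (R : realType) (n : nat).
Implicit Types v : 'rV[R]_n.

Lemma sqnorm_ge0 v : 0 <= sqnorm v.
Proof. by apply: sumr_ge0 => j _; rewrite sqr_ge0. Qed.

Lemma sqnormZ (c : R) v : sqnorm (c *: v) = c ^+ 2 * sqnorm v.
Proof. by rewrite /sqnorm mulr_sumr; apply: eq_bigr => j _; rewrite mxE exprMn. Qed.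

Lemma sqnormN v : sqnorm (- v) = sqnorm v.
Proof. by rewrite -scaleN1r sqnormZ sqrrN expr1n mul1r. Qed.

Lemma sqnorm_gt0 v : (0 < sqnorm v) = (v != 0).
Proof.
rewrite lt_def sqnorm_ge0 andbT; congr (~~ _); apply/eqP/eqP => [|->]; last first.
  by rewrite /sqnorm big1 // => j _; rewrite mxE expr0n.
move/eqP; rewrite psumr_eq0 => [/allP v0|j _]; last exact: sqr_ge0.
apply/rowP => j; rewrite mxE; apply/eqP.
by rewrite -sqrf_eq0; exact: v0 _ (mem_index_enum _).
Qed.

Lemma sqr_norm_le_sqnorm v : `|v| ^+ 2 <= sqnorm v.
Proof.
rewrite [`|v|]mx_normrE.
suff : 0 <= \big[Num.max/0]_ij `|v ij.1 ij.2| /\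
       (\big[Num.max/0]_ij `|v ij.1 ij.2|) ^+ 2 <= sqnorm v by case.
apply: (big_ind (fun a => 0 <= a /\ a ^+ 2 <= sqnorm v)).
- by rewrite expr0n lexx sqnorm_ge0.
- by move=> a b [a0 av] [b0 bv]; rewrite /Num.max; case: ifP.
- move=> [i j] _ /=; split => //; rewrite (ord1 i) real_normK ?num_real //.
  by rewrite /sqnorm (bigD1 j) //= lerDl; apply: sumr_ge0 => k _; exact: sqr_ge0.
Qed.

End sqnorm.

Section sigma_convex.
Variables (R : realType) (n : nat) (S : set 'rV[R]_n).
Implicit Types (x y : 'rV[R]_n) (h : 'rV[R]_n -> R) (s : R).

Lemma convex_set_comb a x y : convex_set S -> 0 <= a <= 1 -> S x -> S y ->
  S (a *: x + (1 - a) *: y).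
Proof.
move=> cS a01 Sx Sy.
have a_itv : Itv.spec (@Itv.num_sem R) (Itv.Real `[0%Z, 1%Z]%O) a.
  case/andP: a01 => a0 a1.
  by rewrite /Itv.spec /Itv.num_sem /= in_itv /= a0 a1 ger0_real.
by have := cS x y (Itv.mk a_itv); rewrite !inE; apply.
Qed.

Lemma sigma_convex_le h s1 s2 :
  s2 <= s1 -> sigma_convex S h s1 -> sigma_convex S h s2.
Proof.
move=> s21 hs1 x y a Sx Sy a01; apply: le_trans (hs1 x y a Sx Sy a01) _.
case/andP: a01 => a0 a1.
rewrite lerD2l lerN2 ler_wpM2r ?sqnorm_ge0 // ler_wpM2r // ler_wpM2l //.
by rewrite mulr_ge0 // subr_ge0.
Qed.

Lemma sigma_convexBr h s c :
  sigma_convex S h s -> sigma_convex S (fun y => h y - c) s.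
Proof. by move=> hs x y a Sx Sy a01; have := hs x y a Sx Sy a01; lra. Qed.

End sigma_convex.

Section maxf.
Variables (R : realType) (n m : nat) (i0 : 'I_m) (h : 'I_m -> 'rV[R]_n -> R).

Definition maxf y := \big[Num.max/h i0 y]_(i < m) h i y.

Lemma maxf_ge i y : h i y <= maxf y.
Proof. by rewrite /maxf (bigD1 i) //= le_max lexx. Qed.

Lemma maxf_le y c : (forall i, h i y <= c) -> maxf y <= c.
Proof.
move=> hc; apply: (big_ind (fun a => a <= c)) => // a b ac bc.
by rewrite ge_max ac bc.
Qed.

Lemma maxf_continuous (S : set 'rV[R]_n) :
  (forall i, {within S, continuous (h i)}) -> {within S, continuous maxf}.
Proof.
rewrite /maxf => hc; elim: (index_enum _) => [|j r IH].
  by under eq_fun do rewrite big_nil; exact: hc.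
under eq_fun do rewrite big_cons.
exact: (@max_fun_continuous _ (subspace S) _ (h j) _ (hc j) IH).
Qed.

Lemma sigma_convex_maxf (S : set 'rV[R]_n) s :
  (forall i, sigma_convex S (h i) s) -> sigma_convex S maxf s.
Proof.
move=> hs x y a Sx Sy a01; apply: maxf_le => i.
have := hs i x y a Sx Sy a01; case/andP: a01 => a0 a1.
have b0 : 0 <= 1 - a by rewrite subr_ge0.
have := ler_wpM2l a0 (maxf_ge i x); have := ler_wpM2l b0 (maxf_ge i y).
lra.
Qed.

End maxf.

Arguments maxf_ge {R n m i0 h}.
Arguments maxf_le {R n m i0 h y c}.

Lemma within_continuous_lbound (R : realType) (V : normedModType R) (S : set V)
    (g : V -> R) x :
  {within S, continuous g} -> S x ->
  exists2 d, 0 < d & forall z, S z -> `|x - z| < d -> g x - 1 < g z.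
Proof.
move=> gc Sx.
have := (@subspace_continuousP _ S _ g).1 gc x Sx.
move=> /cvgr_dist_lt /(_ 1 ltr01).
rewrite near_withinE => /nbhs_ballP [d d0 gd]; exists d => // z Sz xz.
have := gd z; rewrite -ball_normE /= => /(_ xz Sz).
by rewrite ltr_norml => /andP[_]; lra.
Qed.

Lemma closed_ball_bounded (R : realType) (V : normedModType R) (x : V) r :
  0 < r -> bounded_set (closed_ball x r).
Proof.
move=> r0; rewrite closed_ballE //.
change (\forall M \near +oo, [set y | `|x - y| <= r] `<=` [set y | `|y| <= M]).
near=> M => y /= xy; apply: le_trans (_ : `|x| + r <= M).
  by rewrite -[y](subKr x) (le_trans (ler_normB _ _)) // lerD2l.
by near: M; apply: nbhs_pinfty_ge; exact: num_real.
Unshelve. all: end_near.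
Qed.

Section sigma_convex_min.
Variables (R : realType) (n : nat) (S : set 'rV[R]_n) (g : 'rV[R]_n -> R) (s : R).
Hypotheses (cS : convex_set S) (s0 : 0 < s) (gs : sigma_convex S g s).

Lemma sigma_convex_sublevel_bounded x : S x -> {within S, continuous g} ->
  exists r, forall y, S y -> g y <= g x -> `|x - y| <= r.
Proof.
(* Near x, g stays above g x - 1; at the point z of [x, y] with |x - z| = e fixed,
   strong convexity pushes g z below g x by about e s |x - y| / 4. *)
move=> Sx gc; have [d d0 gd] := within_continuous_lbound gc Sx.
pose e := Num.min (d / 2) (1 / 2).
have e0 : 0 < e by rewrite lt_min !divr_gt0.
have ed : e < d by rewrite gt_min ltr_pdivrMr // ltr_pMr // ltr1n.
have e12 : e <= 1 / 2 by rewrite ge_min lexx orbT.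
exists (Num.max 1 (4 / (e * s))) => y Sy gyx; set N := `|x - y|.
have [N1|N1] := leP N 1; first by rewrite le_max N1.
rewrite le_max; apply/orP; right; apply: ltW.
pose t := e / N.
have N0 : 0 < N by apply: lt_trans N1.
have tN : t * N = e by rewrite /t mulfVK // gt_eqF.
have t0 : 0 < t by rewrite divr_gt0.
have t12 : t <= 1 / 2 by apply: le_trans e12; rewrite -tN ler_peMr // ltW.
have t01 : 0 <= t <= 1 by apply/andP; split; lra.
have xz : `|x - (t *: y + (1 - t) *: x)| < d.
  have -> : x - (t *: y + (1 - t) *: x) = t *: (x - y).
    by apply/rowP => j; rewrite !mxE; ring.
  by rewrite normrZ gtr0_norm // tN.
have lower := gd _ (convex_set_comb cS t01 Sy Sx) xz.
have upper := gs Sy Sx t01.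
have ty : t * g y <= t * g x by rewrite ler_wpM2l // ltW.
have ND : N ^+ 2 <= sqnorm (y - x) by rewrite -opprB sqnormN sqr_norm_le_sqnorm.
have ts0 : 0 < t * s / 2 by rewrite divr_gt0 // mulr_gt0.
have quad : t * s / 2 * (1 / 2 * N ^+ 2) <= t * (1 - t) * s / 2 * sqnorm (y - x).
  rewrite (_ : t * (1 - t) * s / 2 * _ = t * s / 2 * ((1 - t) * sqnorm (y - x))).
    by rewrite ler_pM2l //; apply: ler_pM; rewrite ?sqr_ge0 //; lra.
  by ring.
have eN : e * s * N = 4 * (t * s / 2 * (1 / 2 * N ^+ 2)) by rewrite -tN; field.
have : e * s * N < 4 by lra.
by rewrite ltr_pdivlMr ?mulr_gt0 // mulrC.
Qed.

Lemma sigma_convex_has_min : closed S -> S !=set0 -> {within S, continuous g} ->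
  exists2 xb, S xb & forall y, S y -> g xb <= g y.
Proof.
move=> Sc [x Sx] gc; have [r rB] := sigma_convex_sublevel_bounded Sx gc.
have r0 : 0 < `|r| + 1 by rewrite ltr_wpDl.
pose K := S `&` closed_ball x (`|r| + 1).
have Kx : K x by split => //; exact: closed_ballxx.
have Bc : compact (closed_ball x (`|r| + 1)).
  apply: bounded_closed_compact; first exact: closed_ball_bounded.
  exact: closed_ball_closed.
have Kc : compact K.
  apply: subclosed_compact Bc _ => [|y []//].
  by apply: closedI => //; exact: closed_ball_closed.
have [xb /set_mem [Sxb _] xbmin] :=
  compact_EVT_min (ex_intro _ x Kx) Kc (continuous_subspaceW (@subIsetl _ _ _) gc).
exists xb => // y Sy; have [gyx|/ltW] := leP (g y) (g x).
  apply/xbmin/mem_set; split; rewrite // closed_ballE // /closed_ball_ /=.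
  by apply: le_trans (rB y Sy gyx) _; rewrite (le_trans (ler_norm r)) ?lerDl.
by apply: le_trans; apply/xbmin/mem_set.
Qed.

Lemma sigma_convex_min_growth xb x : S x -> S xb ->
  (forall y, S y -> g xb <= g y) -> g xb + s / 2 * sqnorm (x - xb) <= g x.
Proof.
move=> Sx Sxb gmin; set D := sqnorm (x - xb).
have D0 : 0 <= D by exact: sqnorm_ge0.
have along a : 0 < a -> a <= 1 -> g xb + (1 - a) * s / 2 * D <= g x.
  move=> a0 a1; have a01 : 0 <= a <= 1 by rewrite (ltW a0) a1.
  have := gmin _ (convex_set_comb cS a01 Sx Sxb); have := gs Sx Sxb a01.
  rewrite -/D => upper lower.
  have : a * (g xb + (1 - a) * s / 2 * D) <= a * g x by lra.
  by rewrite ler_pM2l.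
(* Letting a tend to 0 in [along]; the explicit a below refutes a violation. *)
rewrite leNgt; apply/negP => lt_gx.
pose e := g xb + s / 2 * D - g x.
have e0 : 0 < e by rewrite subr_gt0.
have esD : 0 < e + s * D by rewrite ltr_wpDr // mulr_ge0 // ltW.
pose a := e / (e + s * D).
have aE : a * (e + s * D) = e by rewrite mulfVK // gt_eqF.
have a0 : 0 < a by rewrite divr_gt0.
have a1 : a <= 1 by rewrite ler_pdivrMr // mul1r lerDl mulr_ge0 // ltW.
have := along a a0 a1.
have ae : 0 <= a * e by rewrite mulr_ge0 ?ltW.
have eE : e = g xb + s / 2 * D - g x by [].
move: aE; rewrite mulrDr; lra.
Qed.

Lemma sigma_convex_min_unique xb y : S y -> S xb ->
  (forall z, S z -> g xb <= g z) -> g y <= g xb -> y = xb.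
Proof.
move=> Sy Sxb gmin gy.
suff : ~~ (0 < sqnorm (y - xb)) by rewrite sqnorm_gt0 subr_eq0 negbK => /eqP.
apply/negP => D0; have := sigma_convex_min_growth Sy Sxb gmin.
have : 0 < s / 2 * sqnorm (y - xb) by rewrite mulr_gt0 ?divr_gt0.
lra.
Qed.

End sigma_convex_min.

Lemma maxf_argmin_pareto_optimal (R : realType) (n m : nat) (i0 : 'I_m)
    (S : set 'rV[R]_n) (F : 'I_m -> 'rV[R]_n -> R) (c : 'I_m -> R) s xb :
  convex_set S -> 0 < s -> (forall i, sigma_convex S (F i) s) -> S xb ->
  (forall y, S y -> maxf i0 (fun i y => F i y - c i) xb <=
                    maxf i0 (fun i y => F i y - c i) y) ->
  pareto_optimal S F xb.
Proof.
move=> cS s0 Fs Sxb xbmin; split=> // -[y [Sy [Fyx Fne]]]; apply: Fne.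
have gs := sigma_convex_maxf i0 (fun i => sigma_convexBr (c i) (Fs i)).
suff -> : y = xb by [].
apply: (sigma_convex_min_unique cS s0 gs Sy Sxb xbmin).
by apply: maxf_le => i; apply: le_trans _ (maxf_ge i xb); rewrite lerD2r.
Qed.

Lemma sigma_convex_step_gain (R : realType) (n : nat) (S : set 'rV[R]_n)
    (h : 'rV[R]_n -> R) s l t x xb :
  sigma_convex S h s -> S x -> S xb -> 0 <= t <= 1 ->
  h xb + s / 2 * sqnorm (x - xb) <= h x ->
  (t * s - (s + l) / 2 * t ^+ 2) * sqnorm (x - xb) <=
    h x - h (t *: xb + (1 - t) *: x) -
      l / 2 * sqnorm (x - (t *: xb + (1 - t) *: x)).
Proof.
move=> hs Sx Sxb t01 gain; have := hs xb x t Sxb Sx t01.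
have -> : x - (t *: xb + (1 - t) *: x) = t *: (x - xb).
  by apply/rowP => j; rewrite !mxE; ring.
rewrite sqnormZ -[xb - x]opprB sqnormN.
have : t * (s / 2 * sqnorm (x - xb)) <= t * (h x - h xb).
  by case/andP: t01 => t0 _; rewrite ler_wpM2l //; lra.
lra.
Qed.

Lemma upsilon_ge0 (R : realType) (l s : R) : 0 < s -> 0 <= l -> 0 <= upsilon l s.
Proof.
move=> s0 l0; rewrite /upsilon; case: ifP => [ls|_]; first lra.
by rewrite divr_ge0 ?sqr_ge0 ?mulr_ge0.
Qed.

Lemma upsilon_le_gain (R : realType) (l s : R) : 0 < s -> 0 <= l ->
  exists2 t, 0 <= t <= 1 & upsilon l s <= t * s - (s + l) / 2 * t ^+ 2.
Proof.
move=> s0 l0; rewrite /upsilon; case: ifPn => [ls|]; first by exists 1; lra.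
rewrite -leNgt => sl; have l_gt0 : 0 < l by lra.
exists (s / (2 * l)).
  by rewrite divr_ge0 ?mulr_ge0 ?(ltW s0) //= ler_pdivrMr ?mulr_gt0 // mul1r; lra.
rewrite -subr_ge0 (_ : _ - _ = s ^+ 2 * (2 * l - s) / (8 * l ^+ 2)); last first.
  by field; rewrite gt_eqF.
by rewrite divr_ge0 ?mulr_ge0 ?sqr_ge0 //; lra.
Qed.

Lemma u_merit_ge (R : realType) (n m : nat) (S : set 'rV[R]_n)
    (F : 'I_m -> 'rV[R]_n -> R) l x y c :
  S y -> (forall i, c <= F i x - F i y - l / 2 * sqnorm (x - y)) ->
  (c%:E <= u_merit S F l x)%E.
Proof.
move=> Sy cF; apply: le_trans (ereal_sup_ubound _); last by exists y.
apply: (big_ind (fun v => c%:E <= v)%E) => [|a b ca cb|i _]; first exact: leey.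
- by rewrite le_min ca cb.
- by rewrite lee_fin.
Qed.

Theorem corollary6p2 (R : realType) (n m : nat) (hm : (0 < m)%N)
  (S : set 'rV[R]_n) (F : 'I_m -> 'rV[R]_n -> R) (sig : 'I_m -> R) (l : R) :
  S !=set0 -> closed S -> convex_set S ->
  (forall i, {within S, continuous (F i)}) ->
  (forall i, 0 < sig i) ->
  (forall i, sigma_convex S (F i) (sig i)) ->
  0 <= l ->
  let sigma := \big[Num.min/sig (Ordinal hm)]_(i < m) sig i in
  forall x, S x ->
    ((upsilon l sigma)%:E *
       ereal_inf [set (sqnorm (x - xs))%:E | xs in pareto_optimal S F] <=
     u_merit S F l x)%E.
Proof.
move=> S0 Sc cS Fc sig0 Fsig l0 sigma x Sx.
have sigma0 : 0 < sigma.
  by apply: (big_ind (fun a => 0 < a)) => // a b a0 b0; rewrite lt_min a0 b0.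
have Fs i : sigma_convex S (F i) sigma.
  by apply: sigma_convex_le (Fsig i); rewrite /sigma (bigD1 i) //= ge_min lexx.
pose g := maxf (Ordinal hm) (fun i y => F i y - F i x).
have gs : sigma_convex S g sigma.
  exact: sigma_convex_maxf (fun i => sigma_convexBr (F i x) (Fs i)).
have gc : {within S, continuous g}.
  by apply: maxf_continuous => i y; apply: cvgB; [exact: Fc | exact: cvg_cst].
have [xb Sxb xbmin] := sigma_convex_has_min cS sigma0 gs Sc S0 gc.
have gain i : F i xb + sigma / 2 * sqnorm (x - xb) <= F i x.
  have := sigma_convex_min_growth cS sigma0 gs Sx Sxb xbmin.
  have : g x <= 0 by apply: maxf_le => j; rewrite subrr.
  by have := maxf_ge i xb : F i xb - F i x <= g xb; lra.
have xbP : pareto_optimal S F xb.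
  exact: maxf_argmin_pareto_optimal cS sigma0 Fs Sxb xbmin.
have [t t01 ups_t] := upsilon_le_gain sigma0 l0.
have Sy := convex_set_comb cS t01 Sxb Sx.
apply: le_trans _ (u_merit_ge (c := upsilon l sigma * sqnorm (x - xb)) Sy _).
  rewrite EFinM lee_wpmul2l ?lee_fin ?upsilon_ge0 //.
  by apply: ereal_inf_lbound; exists xb.
move=> i; apply: le_trans (sigma_convex_step_gain l (Fs i) Sx Sxb t01 (gain i)).
by rewrite ler_wpM2r ?sqnorm_ge0.
Qed.
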